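(* In the Mahi-Mahi protocol, if an honest validator commits some block $b$ in a leader slot $s$, then no other honest validator decides to directly skip the slot $s$.
   Context: Setting: $n=3f+1$ validators, at most $f$ Byzantine; honest validators create exactly one block per round, Byzantine ones may equivocate. Each valid block of round $r$ references (parents) at least $2f+1$ blocks of round $r-1$. Each validator has a local DAG of valid blocks, containing a block only with all its causal history. A block $b$ of round $r'$ is a vote for a block $L$ of round $r<r'$ with author $a$ if the first block with author $a$ and round $r$ met in the deterministic depth-first search from $b$ along parent references is $L$. With wave length $w\in\{4,5\}$, a block of round $r+w-1$ is a certificate for a block $L$ of round $r$ if at least $2f+1$ of its parents are votes for $L$. Leader slots of round $r$ are pairs (validator, $r$) chosen by a global common coin, identical for all validators, totally ordered. A validator classifies slots: direct skip if its local DAG has $2f+1$ blocks of round $r+w-2$ that are not votes for the block $L$ in the slot; direct commit of $L$ if it has $2f+1$ round-$(r+w-1)$ certificates for $L$; otherwise an indirect rule: with anchor the first non-skipped slot of round $>r+w-1$, if the anchor is committed with $A$, commit $L$ if there is a certificate $c$ for $L$ with a path from $A$ to $c$, else skip; if the anchor is undecided, the slot is undecided. (In particular, a slot is only committed with $L$ if the validator's DAG contains a certificate for $L$.) *)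

From mathcomp Require Import all_boot.
Set Implicit Arguments.
Unset Strict Implicit.
Unset Printing Implicit Defensive.

Section MahiMahi.

Variable f : nat.
Local Notation V := 'I_(3 * f + 1).

(* Abstract universe of blocks: each block has an author, a round, and an
   ordered list of parent references (the order fixes the deterministic DFS). *)
Variable Block : eqType.
Variables (author : Block -> V) (round : Block -> nat)
          (parents : Block -> seq Block).

Definition quorum : nat := 2 * f + 1.

(* number of distinct authors among a sequence of blocks (stake of the set) *)
Definition nauth (s : seq Block) : nat := size (undup (map author s)).

Definition valid (b : Block) : bool :=
  if round b is r.+1 then
    all (fun p => round p == r) (parents b) && (quorum <= nauth (parents b))
  else parents b == [::].

(* The order of first occurrences coincides with that of a DFS with a visited
   set. Fuel (round b).+1 covers the whole causal history of a valid block. *)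
Fixpoint dfs (k : nat) (b : Block) : seq Block :=
  if k is k'.+1 then b :: flatten (map (dfs k') (parents b)) else [::].

Definition history (b : Block) : seq Block := dfs (round b).+1 b.

Definition is_vote (b L : Block) : bool :=
  (round L < round b) &&
  (ohead [seq x <- history b | (author x == author L) && (round x == round L)]
     == Some L).

Variable w : nat.

Definition is_cert (c L : Block) : bool :=
  (round c == round L + w - 1) &&
  (quorum <= nauth [seq p <- parents c | is_vote p L]).

Definition slot := (V * nat)%type.
Definition in_slot (s : slot) (L : Block) : bool :=
  (author L == s.1) && (round L == s.2).

(* common coin: ordered list of leaders of each round; slots are ordered by
   round, then by position in that list. *)
Variable leaders : nat -> seq V.

Definition slots_between (r1 r2 : nat) : seq slot :=
  flatten [seq [seq (a, r) | a <- leaders r] | r <- iota r1 (r2.+1 - r1)].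

Definition reaches (A c : Block) : Prop :=
  exists p : seq Block, path (fun x y => y \in parents x) A p /\ last A p = c.

Section LocalDAG.
Variable D : seq Block.

Definition maxr : nat := \max_(b <- D) round b.

Definition dskip (s : slot) : Prop :=
  forall L, in_slot s L ->
    quorum <= nauth [seq x <- D | (round x == s.2 + w - 2) && ~~ is_vote x L].

Definition dcommit (s : slot) (L : Block) : bool :=
  in_slot s L && (quorum <= nauth [seq c <- D | is_cert c L]).

Inductive status := SCommit of Block | SSkip | SUndec.

Fixpoint decide (k : nat) (s : slot) (x : status) : Prop :=
  (dskip s /\ x = SSkip) \/
  (~ dskip s /\ exists L, dcommit s L /\ x = SCommit L) \/
  (~ dskip s /\ (forall L, ~~ dcommit s L) /\
   match k with
   | 0 => x = SUndec
   | k'.+1 =>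
     let later := slots_between (s.2 + w) maxr in
     (* every later slot (round > r+w-1) is skipped: no anchor *)
     ((forall s', s' \in later -> decide k' s' SSkip) /\ x = SUndec) \/
     (* s' is the anchor: the first non-skipped slot of round > r+w-1 *)
     (exists pre s' post,
        later = pre ++ s' :: post /\
        (forall s'', s'' \in pre -> decide k' s'' SSkip) /\
        ~ decide k' s' SSkip /\
        ((exists A, decide k' s' (SCommit A) /\
           ((exists L c, [/\ in_slot s L, c \in D, is_cert c L, reaches A c
                           & x = SCommit L]) \/
            ((~ exists L c, [/\ in_slot s L, c \in D, is_cert c L & reaches A c])
              /\ x = SSkip)))
         \/ (decide k' s' SUndec /\ x = SUndec)))
   end).

Definition commits (s : slot) (L : Block) : Prop :=
  decide maxr.+1 s (SCommit L).

End LocalDAG.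
End MahiMahi.

(* A direct commit or an indirect commit of L both exhibit a certificate c for
   L in the committing validator's DAG, i.e. 2f+1 distinct authors whose
   round-(r+w-2) blocks are parents of c and vote for L.  A direct skip needs
   2f+1 distinct authors whose round-(r+w-2) blocks do not vote for L.  Two
   quorums of size 2f+1 among 3f+1 validators share an honest author, whose
   unique block of that round would have to be both a vote and a non-vote. *)
From mathcomp Require Import all_boot zify.

Set Implicit Arguments.
Unset Strict Implicit.
Unset Printing Implicit Defensive.

Lemma card_set_mem_seq (T : finType) (s : seq T) :
  #|[set x in s]| = size (undup s).
Proof.
by rewrite cardsE -(eq_card (mem_undup s)); apply/card_uniqP/undup_uniq.
Qed.

Lemma quorum_intersection (T : finType) (f : nat) (honest : {set T})
    (s1 s2 : seq T) :
  #|T| <= 3 * f + 1 -> #|~: honest| <= f ->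
  2 * f + 1 <= size (undup s1) -> 2 * f + 1 <= size (undup s2) ->
  exists a, [/\ a \in honest, a \in s1 & a \in s2].
Proof.
move=> card_T faulty_few quorum1 quorum2.
set A1 := [set x in s1]; set A2 := [set x in s2].
have: ~~ (A1 :&: A2 \subset ~: honest).
  apply: contraTN isT => /subset_leq_card common_faulty.
  have := cardsUI A1 A2; have := max_card (A1 :|: A2).
  by rewrite !card_set_mem_seq; lia.
by case/subsetPn=> a; rewrite !inE negbK => /andP[in1 in2] a_honest; exists a.
Qed.

Section Certificates.

Variables (f : nat) (Block : eqType).
Variables (author : Block -> 'I_(3 * f + 1)) (round : Block -> nat)
          (parents : Block -> seq Block) (w : nat)
          (leaders : nat -> seq 'I_(3 * f + 1)).

Local Notation nauth := (nauth author).
Local Notation valid := (valid author round parents).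
Local Notation is_vote := (is_vote author round parents).
Local Notation is_cert := (is_cert author round parents w).
Local Notation in_slot := (in_slot author round).

Lemma valid_parent_round (x p : Block) :
  valid x -> p \in parents x -> (round p).+1 = round x.
Proof.
rewrite /valid; case: (round x) => [/eqP -> //|r].
by case/andP=> /allP round_parents _ /round_parents /eqP ->.
Qed.

Lemma has_of_nauth_filter (P : pred Block) (s : seq Block) :
  0 < nauth [seq x <- s | P x] -> has P s.
Proof. by rewrite has_filter; apply: contraTneq => ->. Qed.

Lemma certified_of_dcommit (D : seq Block) (s : slot f) (L : Block) :
  dcommit author round parents w D s L ->
  in_slot s L /\ exists2 c, c \in D & is_cert c L.
Proof.
case/andP=> slot_L quorum_certs; split=> //; apply/hasP/has_of_nauth_filter.
by apply: leq_trans quorum_certs; rewrite /quorum addn1.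
Qed.

Lemma certified_of_decide_commit (D : seq Block) (k : nat) (s : slot f)
    (L : Block) :
  decide author round parents w leaders D k s (SCommit L) ->
  in_slot s L /\ exists2 c, c \in D & is_cert c L.
Proof.
case: k => [|k] /= [[_ //]|[[_ [L' [dcommit_L' [->]]]]|[_ [_ indirect]]]];
  try exact: certified_of_dcommit.
case: indirect => [[_ //]|[pre [s' [post [_ [_ [_ [[A [_ anchored]]|[_ //]]]]]]]]].
case: anchored => [[L' [c [slot_L' c_in cert_c _ [->]]]]|[_ //]].
by split=> //; exists c.
Qed.

Variable honest : {set 'I_(3 * f + 1)}.
Hypothesis faulty_few : #|~: honest| <= f.

Lemma cert_excludes_nonvote_quorum (D : seq Block) (c L : Block) :
  valid c -> is_cert c L ->
  (forall x y, x \in parents c -> y \in D -> author x \in honest ->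
     author x = author y -> round x = round y -> x = y) ->
  nauth [seq x <- D | (round x == round L + w - 2) && ~~ is_vote x L]
    < quorum f.
Proof.
move=> valid_c /andP[/eqP round_c votes] equivocation_free.
rewrite ltnNge; apply/negP => nonvotes.
have [a [a_honest]] :=
  quorum_intersection (eq_leq (card_ord _)) faulty_few votes nonvotes.
case/mapP=> x /[!mem_filter] /andP[vote_x x_par] a_x.
case/mapP=> y /[!mem_filter] /andP[/andP[/eqP round_y nonvote_y] y_in] a_y.
have round_x := valid_parent_round valid_c x_par.
have x_eq_y : x = y.
  by apply: equivocation_free x_par y_in _ _ _; rewrite -?a_x -?a_y //; lia.
by rewrite -x_eq_y vote_x in nonvote_y.
Qed.

End Certificates.

Theorem lemma3 (f : nat) (Block : eqType)
  (author : Block -> 'I_(3 * f + 1)) (round : Block -> nat)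
  (parents : Block -> seq Block) (w : nat)
  (leaders : nat -> seq 'I_(3 * f + 1))
  (honest : {set 'I_(3 * f + 1)})
  (dag : 'I_(3 * f + 1) -> seq Block)
  (v v' : 'I_(3 * f + 1)) (s : 'I_(3 * f + 1) * nat) (b : Block) :
  (w = 4 \/ w = 5) ->
  #|~: honest| <= f ->
  (forall r, uniq (leaders r)) ->
  (* honest local DAGs contain only valid blocks, with all their causal history *)
  (forall u, u \in honest -> forall x, x \in dag u -> valid author round parents x) ->
  (forall u, u \in honest -> forall x, x \in dag u ->
     forall p, p \in parents x -> p \in dag u) ->
  (* honest validators create (at most) one block per round *)
  (forall u1 u2 x1 x2, u1 \in honest -> u2 \in honest ->
     x1 \in dag u1 -> x2 \in dag u2 -> author x1 \in honest ->
     author x1 = author x2 -> round x1 = round x2 -> x1 = x2) ->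
  v \in honest -> v' \in honest -> v != v' ->
  s.1 \in leaders s.2 ->
  commits author round parents w leaders (dag v) s b ->
  ~ dskip author round parents w (dag v') s.
Proof.
move=> _ faulty_few _ valid_dag closed_dag equivocation_free v_honest v'_honest
  _ _ /certified_of_decide_commit[slot_b [c c_in cert_c]] skip.
have round_b : round b = s.2 by case/andP: slot_b => _ /eqP.
have := skip b slot_b; rewrite -round_b; apply/negP; rewrite -ltnNge.
apply: (cert_excludes_nonvote_quorum faulty_few (valid_dag v v_honest c c_in) cert_c).
move=> x y x_par y_in; apply: (equivocation_free v v' x y v_honest v'_honest _ y_in).
exact: closed_dag v v_honest c c_in x x_par.
Qed.
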